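(* For every $n>6$, the sensitivity to synchronism of elementary cellular automaton rule $128$ satisfies $\mu(f_{128,n})=\dfrac{3^n-2^{n+1}-10n+2}{3^n-2^{n+1}+2}$.
   Context: Cells are indexed by $\mathbb{Z}_n=\{0,\dots,n-1\}$, indices modulo $n$. Rule $128$ has local rule $r_{128}(x_1,x_2,x_3)=x_1\wedge x_2\wedge x_3$ and global function $f_{128,n}(x)_i=r_{128}(x_{i-1},x_i,x_{i+1})$. An update schedule is an ordered partition $\Delta=(\Delta_1,\dots,\Delta_k)$ of $\mathbb{Z}_n$ into nonempty blocks; $\mathcal{P}_n$ is the set of them. For a block $B$ let $f^{(B)}(x)_i=f_{128,n}(x)_i$ if $i\in B$ and $x_i$ otherwise; $f^{(\Delta)}_{128,n}=f^{(\Delta_k)}\circ\cdots\circ f^{(\Delta_1)}$. The dynamics of $\Delta$ is the transition digraph with arcs $(x,f^{(\Delta)}_{128,n}(x))$; $\mathcal{D}(f_{128,n})$ is the set of distinct dynamics over $\Delta\in\mathcal{P}_n$. The sensitivity to synchronism is $\mu(f_{128,n})=|\mathcal{D}(f_{128,n})|/(3^n-2^{n+1}+2)$. *)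

From HB Require Import structures.
From mathcomp Require Import all_boot all_order all_algebra.
From mathcomp Require Import boolp.
Set Implicit Arguments. Unset Strict Implicit. Unset Printing Implicit Defensive.
Import GRing.Theory Num.Theory.

Definition cfg (n : nat) := {ffun 'I_n -> bool}.

Lemma ord_pos n (i : 'I_n) : 0 < n.
Proof. exact: leq_ltn_trans (leq0n i) (ltn_ord i). Qed.

Definition cprev n (i : 'I_n) : 'I_n :=
  Ordinal (ltn_pmod (i + n.-1) (ord_pos i)).
Definition cnext n (i : 'I_n) : 'I_n :=
  Ordinal (ltn_pmod i.+1 (ord_pos i)).

Definition r128 (a b c : bool) : bool := [&& a, b & c].
Definition f128 n (x : cfg n) : cfg n :=
  [ffun i => r128 (x (cprev i)) (x i) (x (cnext i))].

Definition fblock n (B : {set 'I_n}) (x : cfg n) : cfg n :=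
  [ffun i => if i \in B then f128 x i else x i].

Definition fsched n (D : seq {set 'I_n}) (x : cfg n) : cfg n :=
  foldl (fun y B => fblock B y) x D.

Definition is_schedule n (D : seq {set 'I_n}) : Prop :=
  [/\ all (fun B => B != set0) D,
      pairwise (fun A B : {set 'I_n} => [disjoint A & B]) D &
      \bigcup_(B <- D) B = [set: 'I_n]].

(* The dynamics (transition digraph with arcs (x, f^(D) x)) is determined by
   the map f^(D); we represent it by that map as a finite function. *)
Definition dynamics n (D : seq {set 'I_n}) : {ffun cfg n -> cfg n} :=
  [ffun x => fsched D x].

Definition dyn_set n : {set {ffun cfg n -> cfg n}} :=
  [set F | `[< exists D : seq {set 'I_n}, is_schedule D /\ F = dynamics D >]].

Definition mu128 (n : nat) : rat :=
  (#|dyn_set n|%:R / (3%:R ^+ n - 2%:R ^+ n.+1 + 2%:R))%R.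

(* A schedule acts only through the labeling it puts on the edges {k, k+1} of
   the ring (is k updated before, after, or together with k+1?), and the
   labelings that arise are exactly the valid ones: an Lt edge exists iff a Gt
   edge does; there are 3^n - 2^(n+1) + 2 of them.  Under a labeling v, rule
   128 sets cell i to the conjunction of x over a window: the maximal run of Lt
   edges to the left of i, the maximal run of Gt edges to its right, and one
   more cell on each side.  Two labelings thus have the same dynamics iff at
   every cell their windows agree or both cover the whole ring.

   For n > 6, a case analysis of the windows around an edge shows that if such
   labelings disagree on whether an edge is Lt, the one with the Lt has Gt
   everywhere except on the three edges before some cell, which end with Lt and
   contain another Lt.  These 5n labelings and their 5n mirror images are
   redundant: replacing the final Lt by Eq leaves every window unchanged and
   gives a non-redundant labeling, while the dynamics is injective on the
   non-redundant valid labelings.  Hence there are 3^n - 2^(n+1) + 2 - 10n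
   dynamics. *)

From mathcomp Require Import all_boot all_algebra.
From mathcomp Require Import boolp zify lra.
Set Implicit Arguments. Unset Strict Implicit. Unset Printing Implicit Defensive.
Import GRing.Theory.

Section Cyclic.
Variable n : nat.
Implicit Types i j : 'I_n.

Definition shift i (d : nat) : 'I_n := Ordinal (ltn_pmod (i + d) (ord_pos i)).
Definition offset i j : nat := (j + (n - i)) %% n.
Definition cneg i : 'I_n := Ordinal (ltn_pmod (n - i) (ord_pos i)).

Lemma shift0 i : shift i 0 = i.
Proof. by apply: val_inj; rewrite /= addn0 modn_small. Qed.

Lemma shiftD i a b : shift (shift i a) b = shift i (a + b).
Proof. by apply: val_inj => /=; rewrite modnDml addnA. Qed.

Lemma shift_addn i a : shift i (a + n) = shift i a.
Proof. by apply: val_inj => /=; rewrite addnA modnDr. Qed.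

Lemma shiftn i : shift i n = i.
Proof. by have := shift_addn i 0; rewrite add0n shift0. Qed.

Lemma shift_addmodn i a b : shift i (a + b %% n) = shift i (a + b).
Proof. by apply: val_inj => /=; rewrite !addnA modnDmr. Qed.

Lemma shift_wrap i a b : (a == b) || (a == b + n) -> shift i a = shift i b.
Proof. by case/orP => /eqP ->; rewrite ?shift_addn. Qed.

Lemma shift_inj i a b : shift i a = shift i b -> a < n -> b < n -> a = b.
Proof.
move=> /(congr1 val) /= /eqP + ha hb; rewrite eqn_modDl !modn_small //.
by move/eqP.
Qed.

Lemma offset_lt i j : offset i j < n.
Proof. exact: ltn_pmod (ord_pos i). Qed.

Lemma shift_offset i j : shift i (offset i j) = j.
Proof.
apply: val_inj => /=; rewrite /offset modnDmr.
have -> : i + (j + (n - i)) = j + n by have := ltn_ord i; lia.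
by rewrite modnDr modn_small.
Qed.

Lemma offset_shift i d : offset i (shift i d) = d %% n.
Proof.
rewrite /offset /= modnDml.
have -> : i + d + (n - i) = d + n by have := ltn_ord i; lia.
by rewrite modnDr.
Qed.

Lemma offset_eq i j d : d < n -> shift i d = j -> offset i j = d.
Proof. by move=> hd <-; rewrite offset_shift modn_small. Qed.

Lemma offset_self i : offset i i = 0.
Proof. by apply: offset_eq; rewrite ?shift0 // (ord_pos i). Qed.

Lemma eq_shift_offset i j d : d < n -> (j == shift i d) = (offset i j == d).
Proof.
move=> hd; apply/eqP/eqP => [->|<-]; first by rewrite offset_shift modn_small.
by rewrite shift_offset.
Qed.

Lemma offset_pred i j : offset (shift i n.-1) j = (offset i j).+1 %% n.
Proof.
have hn := ord_pos i; apply: offset_eq; first exact: ltn_pmod.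
rewrite shiftD shift_addmodn.
by rewrite (_ : n.-1 + (offset i j).+1 = offset i j + n) ?shift_addn ?shift_offset //; lia.
Qed.

Lemma offset_succ i j : offset (shift i 1) j = (offset i j + n.-1) %% n.
Proof.
have hn := ord_pos i; apply: offset_eq; first exact: ltn_pmod.
rewrite shiftD shift_addmodn.
by rewrite (_ : 1 + (offset i j + n.-1) = offset i j + n) ?shift_addn ?shift_offset //; lia.
Qed.

Lemma cprevE i : cprev i = shift i n.-1.
Proof. exact: val_inj. Qed.

Lemma cnextE i : cnext i = shift i 1.
Proof. by apply: val_inj => /=; rewrite addn1. Qed.

Lemma shift_pred_succ i : shift (shift i n.-1) 1 = i.
Proof. by rewrite shiftD addn1 prednK ?shiftn // (ord_pos i). Qed.

Lemma shift_succ_pred i : shift (shift i 1) n.-1 = i.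
Proof. by rewrite shiftD add1n prednK ?shiftn // (ord_pos i). Qed.

Lemma cneg_shift i a : cneg (shift i a) = shift (cneg i) (n - a %% n).
Proof.
apply: val_inj => /=; rewrite -modnDmr modnDml.
have ltb := ltn_pmod a (ord_pos i); have lti := ltn_ord i.
move: (a %% n) ltb => b ltb.
case: (ltnP (i + b) n) => h.
  by rewrite (modn_small h) (_ : n - i + (n - b) = n - (i + b) + n) ?modnDr //; lia.
have -> : (i + b) %% n = i + b - n.
  by rewrite {1}(_ : i + b = i + b - n + n) ?modnDr ?modn_small //; lia.
by rewrite (_ : n - i + (n - b) = n - (i + b - n)) //; lia.
Qed.

Lemma cnegK : involutive cneg.
Proof.
move=> i; apply: val_inj => /=; have lti := ltn_ord i.
case: (posnP i) => [i0|i0]; first by rewrite i0 subn0 modnn subn0 modnn.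
by rewrite (modn_small (_ : n - i < n)) ?modn_small; lia.
Qed.

End Cyclic.

Section FindIota.
Variables (p : pred nat) (m : nat).

Lemma find_iota_le : find p (iota 0 m) <= m.
Proof. by rewrite -{2}(size_iota 0 m) find_size. Qed.

Lemma find_iota_before t : t < find p (iota 0 m) -> ~~ p t.
Proof.
move=> ht; have hm : t < m by apply: leq_trans ht find_iota_le.
by have := before_find 0 ht; rewrite nth_iota // add0n => ->.
Qed.

Lemma find_iota_hit : find p (iota 0 m) < m -> p (find p (iota 0 m)).
Proof.
move=> h; have hh : has p (iota 0 m) by rewrite has_find size_iota.
by have := nth_find 0 hh; rewrite nth_iota // add0n.
Qed.

Lemma find_iota_ub t : t < m -> p t -> find p (iota 0 m) <= t.
Proof.
move=> ht hp; rewrite leqNgt; apply/negP => h.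
by have := find_iota_before h; rewrite hp.
Qed.

Lemma find_iota_lb k : k <= m -> (forall t, t < k -> ~~ p t) -> k <= find p (iota 0 m).
Proof.
move=> hk hb; rewrite leqNgt; apply/negP => h.
by have := find_iota_hit (leq_trans h hk); rewrite (negbTE (hb _ h)).
Qed.

Lemma find_iota_eq k : k <= m -> (forall t, t < k -> ~~ p t) ->
  (k < m -> p k) -> find p (iota 0 m) = k.
Proof.
move=> hk hb hh; apply/eqP; rewrite eqn_leq find_iota_lb // andbT.
case: (ltnP k m) => [hkm|hmk]; first exact: find_iota_ub hkm (hh hkm).
exact: leq_trans find_iota_le hmk.
Qed.

End FindIota.

Lemma find_iota_prefix (p q : pred nat) m t0 : t0 < m -> p t0 ->
  (forall t, t <= t0 -> p t = q t) -> find p (iota 0 m) = find q (iota 0 m).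
Proof.
move=> ht hp hpq; have hk : find p (iota 0 m) <= t0 by apply: find_iota_ub.
symmetry; apply: find_iota_eq; first exact: leq_trans hk (ltnW ht).
- move=> t htk; rewrite -hpq; first exact: find_iota_before htk.
  exact: leq_trans (ltnW htk) hk.
- by move=> hkm; rewrite -hpq //; exact: find_iota_hit.
Qed.

(* [v k] labels the edge {k, k+1} of the ring: [Lt] when cell k is updated
   strictly before cell k+1, [Gt] when strictly after, [Eq] when together. *)
Notation label := (option bool).
Notation Lt := (Some true).
Notation Gt := (Some false).
Notation Eq := (@None bool).

Definition labeling n := {ffun 'I_n -> label}.

Lemma label_eq (a b : label) : (a == Lt) = (b == Lt) -> (a == Gt) = (b == Gt) -> a = b.
Proof. by case: a => [[]|]; case: b => [[]|]. Qed.

Section Runs.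
Variable n : nat.
Implicit Types (v w : labeling n) (i j : 'I_n).

Definition valid v := [exists k, v k == Lt] == [exists k, v k == Gt].

Definition left_run v i := find (fun t => v (shift i (n - t.+1)) != Lt) (iota 0 n).
Definition right_run v i := find (fun t => v (shift i t) != Gt) (iota 0 n).

Lemma left_runP v i t : t < left_run v i -> v (shift i (n - t.+1)) = Lt.
Proof. by move/find_iota_before; rewrite negbK => /eqP. Qed.

Lemma right_runP v i t : t < right_run v i -> v (shift i t) = Gt.
Proof. by move/find_iota_before; rewrite negbK => /eqP. Qed.

Lemma left_run_stop v i : left_run v i < n -> v (shift i (n - (left_run v i).+1)) != Lt.
Proof. exact: find_iota_hit. Qed.

Lemma right_run_stop v i : right_run v i < n -> v (shift i (right_run v i)) != Gt.
Proof. exact: find_iota_hit. Qed.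

Lemma left_run_ub v i t : t < n -> v (shift i (n - t.+1)) != Lt -> left_run v i <= t.
Proof. exact: find_iota_ub. Qed.

Lemma right_run_ub v i t : t < n -> v (shift i t) != Gt -> right_run v i <= t.
Proof. exact: find_iota_ub. Qed.

Lemma left_run_lb v i k : k <= n -> (forall t, t < k -> v (shift i (n - t.+1)) = Lt) ->
  k <= left_run v i.
Proof. by move=> hk hb; apply: find_iota_lb => // t /hb ->. Qed.

Lemma right_run_lb v i k : k <= n -> (forall t, t < k -> v (shift i t) = Gt) ->
  k <= right_run v i.
Proof. by move=> hk hb; apply: find_iota_lb => // t /hb ->. Qed.

Lemma left_run_eq v i k : k <= n -> (forall t, t < k -> v (shift i (n - t.+1)) = Lt) ->
  (k < n -> v (shift i (n - k.+1)) != Lt) -> left_run v i = k.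
Proof. by move=> hk hb hh; apply: find_iota_eq => // t /hb ->. Qed.

Lemma right_run_eq v i k : k <= n -> (forall t, t < k -> v (shift i t) = Gt) ->
  (k < n -> v (shift i k) != Gt) -> right_run v i = k.
Proof. by move=> hk hb hh; apply: find_iota_eq => // t /hb ->. Qed.

Lemma left_run_lt v i : (exists k, v k != Lt) -> left_run v i < n.
Proof.
case=> k hk; have hn := ord_pos i.
apply: (@leq_ltn_trans (n.-1 - offset i k)); last by lia.
apply: left_run_ub; first by lia.
have -> : n - (n.-1 - offset i k).+1 = offset i k by have := offset_lt i k; lia.
by rewrite shift_offset.
Qed.

Lemma right_run_lt v i : (exists k, v k != Gt) -> right_run v i < n.
Proof.
case=> k hk; apply: (@leq_ltn_trans (offset i k)); last exact: offset_lt.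
by apply: right_run_ub; rewrite ?offset_lt // shift_offset.
Qed.

Lemma left_run0 v i : v (shift i n.-1) != Lt -> left_run v i = 0.
Proof. by move=> h; apply: left_run_eq => // _; rewrite subn1. Qed.

Lemma right_run0 v i : v i != Gt -> right_run v i = 0.
Proof. by move=> h; apply: right_run_eq => // _; rewrite shift0. Qed.

Lemma left_run_gt0 v i : (0 < left_run v (shift i 1)) = (v i == Lt).
Proof.
have hn := ord_pos i.
have e : shift (shift i 1) (n - 1) = i by rewrite subn1 shift_succ_pred.
apply/idP/idP => h; first by have := left_runP h; rewrite e => ->.
by apply: left_run_lb => // -[_|//]; rewrite e (eqP h).
Qed.

Lemma right_run_gt0 v i : (0 < right_run v i) = (v i == Gt).
Proof.
apply/idP/idP => h; first by have := right_runP h; rewrite shift0 => ->.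
by apply: right_run_lb => [|[_|//]]; rewrite ?shift0 ?(eqP h) // (ord_pos i).
Qed.

Lemma left_run_rec v i : (exists k, v k != Lt) -> left_run v i =
  if v (shift i n.-1) == Lt then (left_run v (shift i n.-1)).+1 else 0.
Proof.
move=> hex; case: eqP => [h|/eqP]; last exact: left_run0.
have hn := ord_pos i; have hL := left_run_lt (shift i n.-1) hex.
apply: left_run_eq => //.
- case=> [_|t ht]; first by rewrite subn1.
  have := left_runP ht; rewrite shiftD.
  by rewrite (_ : n.-1 + (n - t.+1) = n - t.+2 + n) ?shift_addn //; lia.
- move=> hL1; have := left_run_stop hL; rewrite shiftD.
  by rewrite (_ : n.-1 + _ = n - (left_run v (shift i n.-1)).+2 + n) ?shift_addn //; lia.
Qed.

Lemma right_run_rec v i : (exists k, v k != Gt) -> right_run v i =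
  if v i == Gt then (right_run v (shift i 1)).+1 else 0.
Proof.
move=> hex; case: eqP => [h|/eqP]; last exact: right_run0.
have hR := right_run_lt (shift i 1) hex.
apply: right_run_eq => //.
- by case=> [_|t ht]; [rewrite shift0 | have := right_runP ht; rewrite shiftD add1n].
- by move=> _; have := right_run_stop hR; rewrite shiftD add1n.
Qed.

Lemma valid_not_allLt v : 0 < n -> valid v -> exists k, v k != Lt.
Proof.
move=> hn hv; case: (boolP [exists k, v k != Lt]) => [/existsP//|/existsPn hall].
have hLt : [exists k, v k == Lt].
  by apply/existsP; exists (Ordinal hn); rewrite -[_ == _]negbK hall.
move: hv; rewrite /valid hLt => /eqP/esym/existsP [k /eqP hk].
by have := hall k; rewrite hk.
Qed.

Lemma valid_not_allGt v : 0 < n -> valid v -> exists k, v k != Gt.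
Proof.
move=> hn hv; case: (boolP [exists k, v k != Gt]) => [/existsP//|/existsPn hall].
have hGt : [exists k, v k == Gt].
  by apply/existsP; exists (Ordinal hn); rewrite -[_ == _]negbK hall.
move: hv; rewrite /valid hGt => /eqP/existsP [k /eqP hk].
by have := hall k; rewrite hk.
Qed.

End Runs.

Section Windows.
Variable n : nat.
Implicit Types (v w : labeling n) (i j : 'I_n) (x : cfg n).

Definition in_window v i j :=
  (offset i j <= (right_run v i).+1) || (n <= offset i j + (left_run v i).+1).

Definition window_and v x i := [forall j, in_window v i j ==> x j].

Definition window_map v : {ffun cfg n -> cfg n} :=
  [ffun x => [ffun i => window_and v x i]].

Definition full_window v i := n <= left_run v i + right_run v i + 3.

Lemma in_window_rec v i j : 1 < n -> valid v ->
  in_window v i j = [|| j == i,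
    (if v (shift i n.-1) == Lt then in_window v (shift i n.-1) j else j == shift i n.-1)
  | (if v i == Gt then in_window v (shift i 1) j else j == shift i 1)].
Proof.
move=> hn hv; have hn0 : 0 < n by lia.
have hL := valid_not_allLt hn0 hv; have hG := valid_not_allGt hn0 hv.
have ji : (j == i) = (offset i j == 0) by rewrite -{1}(shift0 i) eq_shift_offset.
rewrite /in_window offset_pred offset_succ ji !eq_shift_offset //; last by lia.
have hl' := left_run_lt (shift i n.-1) hL; have hr' := right_run_lt (shift i 1) hG.
have E' : v (shift i n.-1) == Lt -> right_run v (shift i n.-1) = 0.
  by move/eqP=> h; rewrite right_run0 // h.
have F' : v i == Gt -> left_run v (shift i 1) = 0.
  by move/eqP=> h; rewrite left_run0 // shift_succ_pred h.
rewrite (left_run_rec i hL) (right_run_rec i hG); move: E' F' hl' hr'.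
move: (left_run v _) (right_run v (shift i 1)) (right_run v _) (left_run v (shift i 1)).
move: (offset_lt i j) => + a b c e; move: (offset i j) => d hd.
have [->|d0] : d = n.-1 \/ d < n.-1 by lia.
  rewrite prednK // modnn (_ : n.-1 + n.-1 = n.-2 + n) ?modnDr ?modn_small; try lia.
  by case: (_ == Lt); case: (_ == Gt) => /= h1 h2 h3 h4; rewrite ?h1 ?h2 //; lia.
rewrite (modn_small (_ : d.+1 < n)); last by lia.
have [->|d1] : d = 0 \/ 0 < d by lia.
  rewrite add0n modn_small; last by lia.
  by case: (_ == Lt); case: (_ == Gt) => /= h1 h2 h3 h4; rewrite ?h1 ?h2 //; lia.
rewrite (_ : d + n.-1 = d.-1 + n) ?modnDr ?modn_small; try lia.
by case: (_ == Lt); case: (_ == Gt) => /= h1 h2 h3 h4; rewrite ?h1 ?h2 //; lia.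
Qed.

Lemma window_and_rec v x i : 1 < n -> valid v ->
  window_and v x i = r128
    (if v (shift i n.-1) == Lt then window_and v x (shift i n.-1) else x (shift i n.-1))
    (x i)
    (if v i == Gt then window_and v x (shift i 1) else x (shift i 1)).
Proof.
move=> hn hv; have forall_eq1 a : [forall j, (j == a) ==> x j] = x a.
  by apply/forallP/idP => [/(_ a)|h j]; rewrite ?eqxx //; apply/implyP => /eqP ->.
have forall_or3 (P Q R : pred 'I_n) : [forall j, [|| P j, Q j | R j] ==> x j] =
    [&& [forall j, P j ==> x j], [forall j, Q j ==> x j] & [forall j, R j ==> x j]].
  apply/forallP/and3P => [h|[/forallP h1 /forallP h2 /forallP h3] j].
    by split; apply/forallP => j; apply/implyP => hj; apply: (implyP (h j)); rewrite hj ?orbT.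
  by apply/implyP => /or3P [/(implyP (h1 j))|/(implyP (h2 j))|/(implyP (h3 j))].
rewrite {1}/window_and.
rewrite (eq_forallb (fun j => congr1 (implb^~ (x j)) (in_window_rec i j hn hv))).
rewrite forall_or3 forall_eq1 /r128.
by case: ifP => _; case: ifP => _; rewrite ?forall_eq1 /window_and andbCA.
Qed.

End Windows.

Section Schedules.
Variable n : nat.
Implicit Types (i k : 'I_n) (x : cfg n) (D : seq {set 'I_n}).

Definition block_index D i := find (fun B : {set 'I_n} => i \in B) D.

Definition label_of_rank (f : 'I_n -> nat) : labeling n :=
  [ffun k => if f k < f (shift k 1) then Lt else if f (shift k 1) < f k then Gt else Eq].

Lemma label_of_rank_Lt f k : (label_of_rank f k == Lt) = (f k < f (shift k 1)).
Proof. by rewrite ffunE; case: ltnP => //; case: ltnP. Qed.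

Lemma label_of_rank_Gt f k : (label_of_rank f k == Gt) = (f (shift k 1) < f k).
Proof. by rewrite ffunE; case: ltnP => h1; case: ltnP => h2 //; lia. Qed.

Lemma label_of_rank_valid f : 0 < n -> valid (label_of_rank f).
Proof.
move=> hn; have around k : shift (shift k 1) n.-1 = k := shift_succ_pred k.
have mono (r : rel nat) : transitive r -> reflexive r ->
    (forall k, r (f k) (f (shift k 1))) -> forall k d, r (f k) (f (shift k d)).
  move=> rT rR h k; elim=> [|d IH]; first by rewrite shift0.
  by rewrite -addn1 -shiftD (rT _ _ _ IH (h _)).
rewrite /valid; apply/eqP; apply/idP/idP => /existsP [k0 hk0]; apply: contraT => /existsPn hall.
- have h k : f k <= f (shift k 1) by rewrite leqNgt -label_of_rank_Gt; exact: hall.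
  have := mono leq leq_trans leqnn h (shift k0 1) n.-1.
  by rewrite around leqNgt -label_of_rank_Lt hk0.
- have h k : f (shift k 1) <= f k by rewrite leqNgt -label_of_rank_Lt; exact: hall.
  have := mono geq (fun _ _ _ h1 h2 => leq_trans h2 h1) leqnn h (shift k0 1) n.-1.
  by rewrite around /= leqNgt -label_of_rank_Gt hk0.
Qed.

Lemma mem_nth_block_index D i :
  block_index D i < size D -> i \in nth set0 D (block_index D i).
Proof. by rewrite -has_find; exact: nth_find. Qed.

Lemma schedule_block_index D : is_schedule D ->
  (forall i, block_index D i < size D) /\
  (forall i t, i \in nth set0 D t -> t = block_index D i).
Proof.
case=> _ hpw hcov; have cov i : block_index D i < size D.
  have : i \in \bigcup_(B <- D) B by rewrite hcov inE.
  by rewrite bigcup_seq -has_find => /bigcupP [B hB hiB]; apply/hasP; exists B.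
split=> // i t hi.
have hsz : t < size D by rewrite ltnNge; apply: contraTN hi => h; rewrite nth_default ?inE.
have hpi := mem_nth_block_index (cov i).
have disj a b : a < b < size D -> i \in nth set0 D a -> i \in nth set0 D b -> False.
  move=> /andP [hab hb] ha; have := (elimT (pairwiseP set0) hpw) a b (ltn_trans hab hb) hb hab.
  by move/disjointFr => /(_ _ ha) ->.
case: (ltngtP t (block_index D i)) => // h.
  by case: (disj t _ _ hi hpi); rewrite h cov.
by case: (disj _ t _ hpi hi); rewrite h hsz.
Qed.

Section Prefix.
Variables (D : seq {set 'I_n}) (x : cfg n).
Hypotheses (hn : 1 < n) (cover : forall i, block_index D i < size D)
  (block_unique : forall i t, i \in nth set0 D t -> t = block_index D i).
Let v := label_of_rank (block_index D).

Definition partial_run t : cfg n :=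
  [ffun i => if block_index D i < t then window_and v x i else x i].

Lemma partial_run_step t :
  fblock (nth set0 D t) (partial_run t) = partial_run t.+1.
Proof.
apply/ffunP => i; rewrite !ffunE; case hi: (i \in nth set0 D t).
- have ti := block_unique hi.
  rewrite -ti ltnn ltnSn cprevE cnextE.
  rewrite (window_and_rec x i hn (label_of_rank_valid _ (ltnW hn))).
  rewrite /v label_of_rank_Lt label_of_rank_Gt shift_pred_succ -ti.
  by case: (block_index D (shift i n.-1) < t); case: (block_index D (shift i 1) < t).
- have : block_index D i != t.
    by apply: contraFN hi => /eqP <-; exact: mem_nth_block_index.
  by move=> ne; rewrite ltnS (leq_eqVlt (block_index D i)) (negbTE ne).
Qed.

Lemma fsched_window : fsched D x = window_map v x.
Proof.
have prefix t : t <= size D -> foldl (fun y B => fblock B y) x (take t D) = partial_run t.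
  elim: t => [_|t IH ht]; first by apply/ffunP => i; rewrite take0 ffunE.
  by rewrite (take_nth set0 ht) foldl_rcons IH ?partial_run_step // ltnW.
rewrite /fsched -(take_size D) prefix //.
by apply/ffunP => i; rewrite !ffunE cover.
Qed.

End Prefix.

End Schedules.

Section Realization.
Variable n : nat.
Implicit Types (v : labeling n) (c k : 'I_n) (a : label).

Lemma count_shift c (p : pred 'I_n) :
  count (fun t => p (shift c t)) (iota 0 n) = count p (enum 'I_n).
Proof.
have -> : (fun t => p (shift c t)) = preim (shift c) p by [].
rewrite -count_map; apply/permP; apply: uniq_perm.
- rewrite map_inj_in_uniq ?iota_uniq // => a b.
  by rewrite !mem_iota !add0n => /andP [_ ha] /andP [_ hb] /shift_inj; apply.
- exact: enum_uniq.
- move=> k; rewrite mem_enum; apply/mapP; exists (offset c k); last by rewrite shift_offset.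
  by rewrite mem_iota add0n offset_lt.
Qed.

Definition count_label v c a d := count (fun t => v (shift c t) == a) (iota 0 d).

Lemma count_labelS v c a d :
  count_label v c a d.+1 = count_label v c a d + (v (shift c d) == a).
Proof. by rewrite /count_label -addn1 iotaD count_cat /= add0n addn0. Qed.

Lemma count_label_le v c a d : count_label v c a d <= d.
Proof. by rewrite /count_label (leq_trans (count_size _ _)) // size_iota. Qed.

Lemma count_label_total v c c' a : count_label v c a n = count_label v c' a n.
Proof. by rewrite /count_label !(count_shift _ (fun k => v k == a)). Qed.

(* A rank for [v]: walk around the ring from [c], going up at [Lt] edges and
   down at [Gt] edges; it also fits the closing edge c-1 exactly when
   [height_closes v c].  The offset [n] keeps the truncated subtraction exact. *)
Definition height v c k :=
  n + count_label v c Lt (offset c k) - count_label v c Gt (offset c k).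

Definition height_closes v c : Prop :=
  [\/ v (shift c n.-1) = Gt /\ count_label v c Gt n <= count_label v c Lt n,
      v (shift c n.-1) = Lt /\ count_label v c Lt n <= count_label v c Gt n
    | v (shift c n.-1) = Eq /\ count_label v c Lt n = count_label v c Gt n].

Lemma label_of_height v c : height_closes v c ->
  label_of_rank (height v c) = v.
Proof.
move=> hcut; have hn := ord_pos c.
apply/ffunP => k; rewrite ffunE /height.
have ek : k = shift c (offset c k) by rewrite shift_offset.
have e1 : shift k 1 = shift c (offset c k).+1 by rewrite {1}ek shiftD addn1.
have [hdn|hdn] : offset c k = n.-1 \/ offset c k < n.-1 by have := offset_lt c k; lia.
- have ec : shift k 1 = c by rewrite e1 hdn prednK // shiftn.
  have -> : v k = v (shift c n.-1) by rewrite {1}ek hdn.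
  rewrite ec offset_self hdn.
  have eL a : count_label v c a n = count_label v c a n.-1 + (v (shift c n.-1) == a).
    by rewrite -count_labelS prednK.
  have c0 a : count_label v c a 0 = 0 by [].
  move: hcut; rewrite /height_closes !eL !c0; have := count_label_le v c Gt n.-1.
  by move=> hle [[-> h]|[-> h]|[-> h]]; move: h; rewrite /= ?addn0 ?addn1 => h;
    repeat case: ltnP => ?; first [done | lia].
- rewrite e1 offset_shift modn_small; last by lia.
  rewrite !count_labelS -ek; have := count_label_le v c Gt (offset c k).
  by case: (v k) => [[]|] /=; rewrite ?addn0 ?addn1 => hle;
    repeat case: ltnP => ?; first [done | lia].
Qed.

Lemma valid_cut v : 0 < n -> valid v -> exists c, height_closes v c.
Proof.
move=> hn /eqP hv; pose c0 : 'I_n := Ordinal hn.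
have tot c a : count_label v c a n = count_label v c0 a n := count_label_total v c c0 a.
have has_label a : 0 < count_label v c0 a n -> exists k, v k = a.
  by rewrite -has_count => /hasP [t _ /eqP hk]; exists (shift c0 t).
have edge_with a b : [exists k, v k == a] = [exists k, v k == b] ->
    0 < count_label v c0 a n -> exists c, v (shift c n.-1) = b.
  move=> hab /has_label [k hk]; have : [exists k, v k == b].
    by rewrite -hab; apply/existsP; exists k; rewrite hk.
  by case/existsP => k' /eqP hk'; exists (shift k' 1); rewrite shift_succ_pred.
case: (ltngtP (count_label v c0 Gt n) (count_label v c0 Lt n)) => h.
- have [c hc] := edge_with _ _ hv (leq_ltn_trans (leq0n _) h).
  by exists c; rewrite /height_closes; apply: Or31; rewrite !tot; split=> //; lia.
- have [c hc] := edge_with _ _ (esym hv) (leq_ltn_trans (leq0n _) h).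
  by exists c; rewrite /height_closes; apply: Or32; rewrite !tot; split=> //; lia.
- exists c0; rewrite /height_closes; case: (v (shift c0 n.-1)) => [[]|].
  + by apply: Or32; split=> //; lia.
  + by apply: Or31; split=> //; lia.
  + by apply: Or33.
Qed.

Lemma valid_rank v : 0 < n -> valid v -> exists f, label_of_rank f = v.
Proof. by move=> hn /(valid_cut hn) [c hc]; exists (height v c); apply: label_of_height. Qed.

Definition level_set (f : 'I_n -> nat) t := [set i | f i == t].

Definition schedule_of_rank (f : 'I_n -> nat) :=
  [seq B <- [seq level_set f t | t <- iota 0 (\max_i f i).+1] | B != set0].

Lemma schedule_of_rank_is_schedule f : is_schedule (schedule_of_rank f).
Proof.
have fM i : f i < (\max_i f i).+1 by rewrite ltnS leq_bigmax.
split; first exact: filter_all.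
- apply: pairwise_filter; rewrite pairwise_map.
  apply: (@sub_pairwise _ ltn); last first.
    by rewrite -sorted_pairwise ?iota_ltn_sorted //; exact: ltn_trans.
  move=> a b hab /=; apply/pred0P => i /=; rewrite !inE; case: eqP => // ->.
  by apply/eqP; lia.
- apply/setP => i; rewrite inE bigcup_seq; apply/bigcupP.
  exists (level_set f (f i)); last by rewrite inE.
  rewrite mem_filter; apply/andP; split; first by apply/set0Pn; exists i; rewrite inE.
  by apply: map_f; rewrite mem_iota add0n fM.
Qed.

Lemma dynamics_schedule_of_rank f : 1 < n ->
  dynamics (schedule_of_rank f) = window_map (label_of_rank f).
Proof.
move=> hn; set D := [seq level_set f t | t <- iota 0 (\max_i f i).+1].
have sizeD : size D = (\max_j f j).+1 by rewrite size_map size_iota.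
have fM i : f i < size D by rewrite sizeD ltnS leq_bigmax.
have indexE i : block_index D i = f i.
  rewrite /block_index find_map; apply: find_iota_eq; first by rewrite -sizeD ltnW.
  - by move=> t ht; rewrite /preim /= inE; apply/eqP => h; lia.
  - by move=> _; rewrite /preim /= inE.
have unique i t : i \in nth set0 D t -> t = block_index D i.
  rewrite indexE; case: (ltnP t (size D)) => ht; last by rewrite nth_default ?inE.
  by rewrite (nth_map 0) ?size_iota -?sizeD // nth_iota -?sizeD // add0n inE => /eqP ->.
have empty_noop (s : seq {set 'I_n}) x :
    fsched [seq B <- s | B != set0] x = fsched s x.
  elim: s x => [//|B s IH] x /=; case: eqP => [->|_] /=; last exact: IH.
  by rewrite IH /fsched /=; congr foldl; apply/ffunP => i; rewrite ffunE inE.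
apply/ffunP => x; rewrite !ffunE empty_noop.
have cover i : block_index D i < size D by rewrite indexE fM.
rewrite (fsched_window x hn cover unique).
have -> : label_of_rank (block_index D) = label_of_rank f.
  by apply/ffunP => k; rewrite !ffunE !indexE.
by rewrite ffunE.
Qed.

End Realization.

Section Dynamics.
Variable n : nat.
Implicit Types (v w : labeling n) (i j : 'I_n).

Definition valid_labelings := [set v : labeling n | valid v].

Lemma dyn_setE : 1 < n -> dyn_set n = (@window_map n) @: valid_labelings.
Proof.
move=> hn; apply/setP => F; rewrite inE; apply/asboolP/imsetP.
- case=> D [hD ->]; have [cover unique] := schedule_block_index hD.
  exists (label_of_rank (block_index D)); first by rewrite inE label_of_rank_valid //; lia.
  by apply/ffunP => x; rewrite ffunE (fsched_window x hn cover unique).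
- case=> v; rewrite inE => hv ->; have [f <-] := valid_rank (ltnW hn) hv.
  exists (schedule_of_rank f); split; first exact: schedule_of_rank_is_schedule.
  by rewrite dynamics_schedule_of_rank.
Qed.

Lemma window_map_in_window v w : window_map v = window_map w ->
  forall i j, in_window v i j = in_window w i j.
Proof.
move=> e i j; pose x : cfg n := [ffun k => k != j].
have and_x u : window_and u x i = ~~ in_window u i j.
  apply/forallP/idP => [h|h k]; first by apply/negP => hin; have := h j; rewrite hin ffunE eqxx.
  by rewrite ffunE; apply/implyP; apply: contraTneq => ->.
have := congr1 (fun F : {ffun cfg n -> cfg n} => F x i) e.
by rewrite !ffunE !and_x => /negb_inj.
Qed.

Lemma full_windowE v i : full_window v i = [forall j, in_window v i j].
Proof.
apply/idP/forallP => [hs j|h]; first by rewrite /in_window; move: hs; rewrite /full_window; lia.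
rewrite /full_window leqNgt; apply/negP => hlt.
have := h (shift i (right_run v i).+2); rewrite /in_window offset_shift modn_small //; lia.
Qed.

Definition same_windows v w := forall i,
  (full_window v i /\ full_window w i) \/
  (left_run v i = left_run w i /\ right_run v i = right_run w i).

Lemma window_map_eqP v w : window_map v = window_map w <-> same_windows v w.
Proof.
split=> [e i|h].
- have E := window_map_in_window e i.
  have [hw|hw] := boolP (full_window w i).
    by left; rewrite full_windowE (eq_forallb E) -full_windowE.
  have hv : ~~ full_window v i by rewrite full_windowE (eq_forallb E) -full_windowE.
  move: hv hw; rewrite /full_window -!ltnNge => hv hw; right.
  have E' d : d < n -> in_window v i (shift i d) = in_window w i (shift i d).
    by move=> hd; rewrite E.
  split; apply/eqP; rewrite eqn_leq; apply/andP; split; rewrite leqNgt; apply/negP => hlt.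
  + by have := E' (n - (left_run w i).+2); rewrite /in_window offset_shift modn_small; lia.
  + by have := E' (n - (left_run v i).+2); rewrite /in_window offset_shift modn_small; lia.
  + by have := E' (right_run w i).+2; rewrite /in_window offset_shift modn_small; lia.
  + by have := E' (right_run v i).+2; rewrite /in_window offset_shift modn_small; lia.
- apply/ffunP => x; rewrite !ffunE; apply/ffunP => i; rewrite !ffunE.
  apply: eq_forallb => j; congr (_ ==> _).
  case: (h i) => [[]|[e1 e2]]; last by rewrite /in_window e1 e2.
  by rewrite !full_windowE => /forallP -> /forallP ->.
Qed.

Lemma same_windows_sym v w : same_windows v w -> same_windows w v.
Proof. by move=> h i; case: (h i) => [[]|[]]; [left | right]. Qed.

Lemma same_windows_full v w i : same_windows v w -> full_window v i = full_window w i.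
Proof.
move=> h; case: (h i) => [[-> ->]|[e1 e2]] //.
by rewrite /full_window e1 e2.
Qed.

Lemma same_windows_runs v w i : same_windows v w -> ~~ full_window w i ->
  left_run v i = left_run w i /\ right_run v i = right_run w i.
Proof. by move=> h; case: (h i) => [[_ ->]|]. Qed.

Lemma label_eq_runs v w k : left_run v (shift k 1) = left_run w (shift k 1) ->
  right_run v k = right_run w k -> v k = w k.
Proof.
by move=> e1 e2; apply: label_eq; [rewrite -!left_run_gt0 e1 | rewrite -!right_run_gt0 e2].
Qed.

End Dynamics.

Definition swap : label -> label := omap negb.

Lemma swapK : involutive swap.
Proof. by case=> [[]|]. Qed.

Lemma swap_eq a b : (swap a == b) = (a == swap b).
Proof. by case: a => [[]|]; case: b => [[]|]. Qed.

Section Mirror.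
Variable n : nat.
Implicit Types (v w : labeling n) (i k : 'I_n).

(* The reflection k |-> -k of the ring maps the edge {k, k+1} to {-k-1, -k}
   and reverses its orientation, hence the [swap]. *)
Definition mirror v : labeling n := [ffun k => swap (v (shift (cneg k) n.-1))].

Lemma mirror_shift v i t : t < n ->
  mirror v (shift i t) = swap (v (shift (cneg i) (n - t.+1))).
Proof.
move=> ht; rewrite ffunE cneg_shift modn_small // shiftD.
by rewrite (_ : n - t + n.-1 = n - t.+1 + n) ?shift_addn //; lia.
Qed.

Lemma mirror_shift_pred v i t : t < n ->
  mirror v (shift i (n - t.+1)) = swap (v (shift (cneg i) t)).
Proof. by move=> ht; rewrite mirror_shift ?subnSK ?subKn //; lia. Qed.

Lemma mirrorK : involutive mirror.
Proof.
move=> v; apply/ffunP => k; have hn := ord_pos k.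
rewrite ffunE mirror_shift; last by lia.
by rewrite cnegK (_ : n - n.-1.+1 = 0) ?shift0 ?swapK //; lia.
Qed.

Lemma mirror_cneg v k : mirror v (cneg (shift k 1)) = swap (v k).
Proof. by rewrite ffunE cnegK shift_succ_pred. Qed.

Lemma exists_mirror v a : [exists k, mirror v k == a] = [exists k, v k == swap a].
Proof.
apply/existsP/existsP => [[k hk]|[k hk]].
  by exists (shift (cneg k) n.-1); rewrite -swap_eq; rewrite ffunE in hk.
by exists (cneg (shift k 1)); rewrite mirror_cneg swap_eq.
Qed.

Lemma valid_mirror v : valid v -> valid (mirror v).
Proof. by rewrite /valid !exists_mirror eq_sym. Qed.

Lemma left_run_mirror v i : left_run (mirror v) i = right_run v (cneg i).
Proof.
apply: eq_in_find => t; rewrite mem_iota => /andP [_ ht].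
by rewrite mirror_shift_pred // swap_eq.
Qed.

Lemma right_run_mirror v i : right_run (mirror v) i = left_run v (cneg i).
Proof.
apply: eq_in_find => t; rewrite mem_iota => /andP [_ ht].
by rewrite mirror_shift // swap_eq.
Qed.

Lemma full_window_mirror v i : full_window (mirror v) i = full_window v (cneg i).
Proof. by rewrite /full_window left_run_mirror right_run_mirror [right_run _ _ + _]addnC. Qed.

Lemma same_windows_mirror v w : same_windows v w -> same_windows (mirror v) (mirror w).
Proof.
move=> h i; rewrite !full_window_mirror !left_run_mirror !right_run_mirror.
by case: (h (cneg i)) => [[]|[]]; [left | right].
Qed.

End Mirror.

Section Disagreement.
Variables (n : nat) (v w : labeling n) (c : 'I_n).
Hypotheses (Hn : 6 < n) (valid_w : valid w) (same : same_windows v w)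
  (v_last : v (shift c n.-1) = Lt) (w_last_nLt : w (shift c n.-1) != Lt).

Let R := right_run w c.

Let runs_of_partial i : ~~ full_window w i ->
  left_run v i = left_run w i /\ right_run v i = right_run w i.
Proof. exact: same_windows_runs. Qed.

Let partial_w_of_v i : ~~ full_window v i -> ~~ full_window w i.
Proof. by rewrite (same_windows_full i same). Qed.

Lemma disagree_full_v : full_window v c.
Proof.
apply: contraT => /partial_w_of_v /runs_of_partial [e _].
have := left_run_gt0 v (shift c n.-1); rewrite shift_pred_succ v_last eqxx e.
by rewrite left_run0.
Qed.

Lemma disagree_right_run_lb : n - 3 <= R.
Proof.
have := disagree_full_v; rewrite (same_windows_full c same) /full_window left_run0 //.
rewrite /R; lia.
Qed.

Lemma disagree_w_Gt d : d < R -> w (shift c d) = Gt.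
Proof. exact: right_runP. Qed.

Lemma disagree_right_run_ub : R <= n - 2.
Proof.
rewrite leqNgt; apply/negP => hR.
have noLt k : w k != Lt.
  rewrite -(shift_offset c k); have := offset_lt c k.
  case: (ltnP (offset c k) n.-1) => h1 h2; first by rewrite disagree_w_Gt //; lia.
  by have -> : offset c k = n.-1 by lia.
move: valid_w; rewrite /valid.
have -> : [exists k, w k == Gt].
  by apply/existsP; exists c; rewrite -{1}(shift0 c) disagree_w_Gt //; lia.
by move/eqP/existsP => [k]; rewrite (negbTE (noLt k)).
Qed.

Lemma disagree_runs_v_at2 : left_run v (shift c 2) = 0 /\ right_run v (shift c 2) = R - 2.
Proof.
have hR := disagree_right_run_lb; have hR' := disagree_right_run_ub.
have l2 : left_run w (shift c 2) = 0.
  by apply: left_run0; rewrite shiftD (@shift_wrap n c _ 1) ?disagree_w_Gt //; lia.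
have r2 : right_run w (shift c 2) = R - 2.
  apply: right_run_eq; first lia.
  - by move=> t ht; rewrite shiftD disagree_w_Gt //; lia.
  - move=> _; rewrite shiftD (_ : 2 + (R - 2) = R); last lia.
    by apply: right_run_stop; rewrite -/R; lia.
have np : ~~ full_window w (shift c 2) by rewrite /full_window l2 r2; lia.
by have [-> ->] := runs_of_partial np.
Qed.

Lemma disagree_v_Gt d : 2 <= d -> d < R -> v (shift c d) = Gt.
Proof.
move=> h1 h2; have := @right_runP n v (shift c 2) (d - 2).
by rewrite disagree_runs_v_at2.2 shiftD subnKC //; apply; lia.
Qed.

Lemma disagree_w_last : w (shift c n.-1) = Eq.
Proof.
have hR := disagree_right_run_lb; have hR' := disagree_right_run_ub.
suff : w (shift c n.-1) != Gt by move: (w_last_nLt); case: (w _) => [[]|].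
apply/eqP => hw.
have rw : R.+1 <= right_run w (shift c n.-1).
  apply: right_run_lb; first lia.
  case=> [_|t ht]; first by rewrite shift0.
  by rewrite shiftD (@shift_wrap n c _ t) ?disagree_w_Gt //; lia.
have : full_window v (shift c n.-1).
  by rewrite (same_windows_full _ same) /full_window; lia.
have lv : left_run v (shift c n.-1) <= n.-1 - R.
  apply: left_run_ub; first lia.
  by rewrite shiftD (@shift_wrap n c _ R.-1) ?disagree_v_Gt //; lia.
by rewrite /full_window right_run0 ?v_last //; lia.
Qed.

Lemma disagree_w_partial e : R <= e -> e < n -> ~~ full_window w (shift c e).
Proof.
move=> h1 h2; have hR := disagree_right_run_lb.
have la : left_run w (shift c e) <= e - R.
  apply: left_run_ub; first lia.
  by rewrite shiftD (@shift_wrap n c _ R.-1) ?disagree_w_Gt //; lia.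
have ra : right_run w (shift c e) <= n.-1 - e.
  apply: right_run_ub; first lia.
  by rewrite shiftD (_ : e + (n.-1 - e) = n.-1) ?disagree_w_last //; lia.
by rewrite /full_window; lia.
Qed.

Lemma disagree_v_tail d : R <= d -> d < n.-1 -> v (shift c d) = w (shift c d).
Proof.
move=> h1 h2; apply: label_eq_runs.
- have np : ~~ full_window w (shift c d.+1) by apply: disagree_w_partial; lia.
  by rewrite shiftD addn1; have [-> _] := runs_of_partial np.
- have np : ~~ full_window w (shift c d) by apply: disagree_w_partial; lia.
  by have [_ ->] := runs_of_partial np.
Qed.

Lemma disagree_v1 : v (shift c 1) = Gt.
Proof.
have hR := disagree_right_run_lb; have hR' := disagree_right_run_ub.
have [hR3|hR3] : R = n - 3 \/ R = n - 2 by lia.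
- have l1 : left_run w (shift c 1) = 0.
    by apply: left_run0; rewrite shift_succ_pred -{1}(shift0 c) disagree_w_Gt //; lia.
  have r1 : right_run w (shift c 1) = R - 1.
    apply: right_run_eq; first lia.
    + by move=> t ht; rewrite shiftD disagree_w_Gt //; lia.
    + move=> _; rewrite shiftD (_ : 1 + (R - 1) = R); last lia.
      by apply: right_run_stop; rewrite -/R; lia.
  have np : ~~ full_window w (shift c 1) by rewrite /full_window l1 r1; lia.
  have [_ rv1] := runs_of_partial np.
  by apply/eqP; rewrite -right_run_gt0 rv1 r1; lia.
- apply/eqP; apply: contraT => hnG.
  have lv1 : left_run v (shift c 1) <= 3.
    apply: left_run_ub; first lia.
    by rewrite shiftD (@shift_wrap n c _ (n - 3)) ?disagree_v_Gt //; lia.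
  have np : ~~ full_window v (shift c 1) by rewrite /full_window right_run0 //; lia.
  have [_ rw1] := runs_of_partial (partial_w_of_v np).
  have := right_run_gt0 w (shift c 1).
  by rewrite -rw1 right_run0 // disagree_w_Gt ?eqxx //; lia.
Qed.

Lemma disagree_v0 : v c = Gt.
Proof.
have hR := disagree_right_run_lb; have hR' := disagree_right_run_ub.
apply/eqP; apply: contraT => hv0.
have : full_window v c := disagree_full_v.
have lv0 : left_run v c <= n - R.
  apply: left_run_ub; first lia.
  by rewrite (@shift_wrap n c _ R.-1) ?disagree_v_Gt //; lia.
by rewrite /full_window right_run0 //; lia.
Qed.

Lemma disagree_v_eq_w d : d < n.-1 -> v (shift c d) = w (shift c d).
Proof.
move=> hd; have hR := disagree_right_run_lb.
case: (ltnP d R) => hdR; last exact: disagree_v_tail.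
rewrite disagree_w_Gt //.
by case: d hd hdR => [|[|d]] hd hdR; rewrite ?shift0 ?disagree_v0 ?disagree_v1 ?disagree_v_Gt.
Qed.

Lemma disagree_w_head d : d < n - 3 -> w (shift c d) = Gt.
Proof. by move=> hd; apply: disagree_w_Gt; have := disagree_right_run_lb; lia. Qed.

Lemma disagree_w_tail_Lt : (w (shift c (n - 3)) == Lt) || (w (shift c (n - 2)) == Lt).
Proof.
move: valid_w; rewrite /valid.
have -> : [exists k, w k == Gt].
  by apply/existsP; exists c; rewrite -{1}(shift0 c) disagree_w_head //; lia.
move/eqP/existsP => [k]; rewrite -(shift_offset c k); have := offset_lt c k.
case: (ltnP (offset c k) (n - 3)) => h1 h2; first by rewrite disagree_w_head.
have [->|[->|->]] : offset c k = n - 3 \/ offset c k = n - 2 \/ offset c k = n.-1 by lia.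
- by move=> ->.
- by move=> ->; rewrite orbT.
- by rewrite disagree_w_last.
Qed.

End Disagreement.

Section Tails.
Variable n : nat.
Implicit Types (v w : labeling n) (c i k : 'I_n) (F G : nat -> label).

Definition from_offsets c F : labeling n := [ffun k => F (offset c k)].

Lemma from_offsets_shift c F d : d < n -> from_offsets c F (shift c d) = F d.
Proof. by move=> hd; rewrite ffunE offset_shift modn_small. Qed.

Lemma from_offsetsP v c F : (forall d, d < n -> v (shift c d) = F d) -> v = from_offsets c F.
Proof. by move=> h; apply/ffunP => k; rewrite ffunE -{1}(shift_offset c k) h ?offset_lt. Qed.

Lemma from_offsets_eq c o F G d e : d < n -> e < n -> (o + e == d) || (o + e == d + n) ->
  from_offsets c F = from_offsets (shift c o) G -> F d = G e.
Proof.
move=> hd he hde /(congr1 (fun u : labeling n => u (shift c d))).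
by rewrite from_offsets_shift // -(shift_wrap c hde) -shiftD from_offsets_shift.
Qed.

Lemma mirror_from_offsets c F :
  mirror (from_offsets c F) = from_offsets (cneg c) (fun d => swap (F (n - d.+1))).
Proof.
apply: from_offsetsP => d hd.
by rewrite mirror_shift // cnegK from_offsets_shift //; lia.
Qed.

(* [from_offsets c (tail_label a b e)] carries a, b, e on the edges c-3, c-2,
   c-1 and [Gt] on all the others. *)
Definition tail_label (a b e : label) d :=
  if d == n.-1 then e else if d == n - 2 then b else if d == n - 3 then a else Gt.

Definition tail_params :=
  [set p : 'I_n * (label * label) | (p.2.1 == Lt) || (p.2.2 == Lt)].

Definition tail_of (e : label) (p : 'I_n * (label * label)) :=
  from_offsets p.1 (tail_label p.2.1 p.2.2 e).

Definition lt_tails := tail_of Lt @: tail_params.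

Definition redundant := lt_tails :|: (@mirror n) @: lt_tails.

Lemma redundant_mirror v : (mirror v \in redundant) = (v \in redundant).
Proof.
have mirror_inj := can_inj (@mirrorK n).
rewrite !inE (mem_imset _ _ mirror_inj) orbC; congr (_ || _).
by rewrite -{2}(mirrorK v) (mem_imset _ _ mirror_inj).
Qed.

Hypothesis Hn : 6 < n.

Lemma tail_label_last a b e : tail_label a b e n.-1 = e.
Proof. by rewrite /tail_label eqxx. Qed.

Lemma tail_label_pen a b e : tail_label a b e (n - 2) = b.
Proof. by rewrite /tail_label; repeat case: eqP => // ?; lia. Qed.

Lemma tail_label_ante a b e : tail_label a b e (n - 3) = a.
Proof. by rewrite /tail_label; repeat case: eqP => // ?; lia. Qed.

Lemma tail_label_head a b e d : d <= n - 4 -> tail_label a b e d = Gt.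
Proof. by move=> hd; rewrite /tail_label; repeat case: eqP => // ?; lia. Qed.

Lemma disagree_lt_tails v w c : valid w -> same_windows v w ->
  v (shift c n.-1) = Lt -> w (shift c n.-1) != Lt -> v \in lt_tails.
Proof.
move=> hw same hv hw'.
have v_eq_w := disagree_v_eq_w Hn hw same hv hw'.
apply/imsetP; exists (c, (w (shift c (n - 3)), w (shift c (n - 2)))).
  by rewrite inE (disagree_w_tail_Lt Hn hw same hv hw').
apply: from_offsetsP => d hd; rewrite /tail_label.
case: eqP => [->//|h1]; rewrite v_eq_w; last by lia.
case: eqP => [->//|h2]; case: eqP => [->//|h3].
by rewrite (disagree_w_head Hn hw same hv hw') //; lia.
Qed.

Lemma redundant_Lt_agree v w : valid v -> valid w -> same_windows v w ->
  v \notin redundant -> w \notin redundant -> forall k, (v k == Lt) = (w k == Lt).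
Proof.
move=> hv hw same nv nw k; rewrite -(shift_succ_pred k).
have in_red u : u \in lt_tails -> u \in redundant by rewrite inE => ->.
apply/idP/idP => /eqP hk; apply/negPn/negP => hk'.
- by move: nv; rewrite in_red // (disagree_lt_tails hw same hk hk').
- by move: nw; rewrite in_red // (disagree_lt_tails hv (same_windows_sym same) hk hk').
Qed.

Lemma window_map_inj v w : valid v -> valid w -> v \notin redundant -> w \notin redundant ->
  window_map v = window_map w -> v = w.
Proof.
move=> hv hw nv nw /window_map_eqP same; apply/ffunP => k; apply: label_eq.
  exact: redundant_Lt_agree.
(* The [Gt] edges of a labeling are the [Lt] edges of its mirror image. *)
rewrite -!(swap_eq _ Lt) -!mirror_cneg; apply: redundant_Lt_agree.
- exact: valid_mirror.
- exact: valid_mirror.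
- exact: same_windows_mirror.
- by rewrite redundant_mirror.
- by rewrite redundant_mirror.
Qed.

End Tails.

Section LocalChange.
Variable n : nat.
Implicit Types (v w : labeling n) (i k : 'I_n).

Lemma right_run_eq_Gt v w i : (forall k, (v k == Gt) = (w k == Gt)) ->
  right_run v i = right_run w i.
Proof. by move=> h; apply: eq_find => t; rewrite h. Qed.

Lemma left_run_change v w k i : (forall j, j != k -> v j = w j) ->
  v (shift k 1) != Lt -> i != shift k 1 -> left_run v i = left_run w i.
Proof.
move=> hvw hk hi; set c := shift k 1 in hk hi.
have ei : i = shift c (offset c i) by rewrite shift_offset.
have ho := offset_lt c i.
have o0 : 0 < offset c i by rewrite lt0n; apply: contra hi => /eqP h; rewrite ei h shift0.
apply: (@find_iota_prefix _ _ _ (offset c i).-1); first by lia.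
  by rewrite {1}ei shiftD (@shift_wrap n c _ 0) ?shift0 //; lia.
move=> t ht; rewrite hvw // {1}ei shiftD (@shift_wrap n c _ (offset c i - t.+1)); last by lia.
rewrite -(shift_succ_pred k) -/c; apply/eqP => /shift_inj h.
by have := h ltac:(lia) ltac:(lia); lia.
Qed.

End LocalChange.

Section Twins.
Variable n : nat.
Hypothesis Hn : 6 < n.
Implicit Types c : 'I_n.

Lemma same_windows_twin c a b :
  same_windows (from_offsets c (tail_label n a b Lt)) (from_offsets c (tail_label n a b Eq)).
Proof.
have head e d : d < n - 3 -> from_offsets c (tail_label n a b e) (shift c d) = Gt.
  by move=> hd; rewrite from_offsets_shift ?(tail_label_head Hn) //; lia.
have full e : full_window (from_offsets c (tail_label n a b e)) c.
  by have := right_run_lb (leq_subr 3 n) (head e); rewrite /full_window; lia.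
move=> i; have [->|ni] := eqVneq i c; first by left.
right; split; last first.
  by apply: right_run_eq_Gt => k; rewrite !ffunE /tail_label; case: ifP.
apply: (@left_run_change n _ _ (shift c n.-1)); rewrite ?shift_pred_succ //.
- move=> j hj; rewrite !ffunE /tail_label.
  suff -> : (offset c j == n.-1) = false by [].
  by apply: contraNF hj => /eqP e; rewrite -e shift_offset.
- by have := head Lt 0; rewrite shift0 => -> //; lia.
Qed.

End Twins.

Section Distinct.
Variable n : nat.
Hypothesis Hn : 6 < n.
Implicit Types (p q : 'I_n * (label * label)) (e : label).

Lemma tail_of_eq e p q : e != Gt -> tail_of e p = tail_of Lt q -> e = Lt /\ p = q.
Proof.
case: p q => [c [a b]] [c' [a' b']] he; rewrite /tail_of /=.
have ho := offset_lt c c'; rewrite -(shift_offset c c'); move: (offset c c') ho => o ho H.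
have ev d d' : d < n -> d' < n -> (o + d' == d) || (o + d' == d + n) ->
    tail_label n a b e d = tail_label n a' b' Lt d'.
  by move=> hd hd' hdd'; apply: from_offsets_eq hdd' H.
have [o0|[o1|[o2|o3]]] : o = 0 \/ o = n.-1 \/ o = n - 2 \/ 0 < o <= n - 3 by lia.
- have := ev n.-1 n.-1 ltac:(lia) ltac:(lia) ltac:(lia).
  have := ev (n - 2) (n - 2) ltac:(lia) ltac:(lia) ltac:(lia).
  have := ev (n - 3) (n - 3) ltac:(lia) ltac:(lia) ltac:(lia).
  by rewrite !tail_label_last !(tail_label_pen Hn) !(tail_label_ante Hn) o0 shift0 => -> -> ->.
- have := ev n.-1 0 ltac:(lia) ltac:(lia) ltac:(lia).
  rewrite tail_label_last (tail_label_head Hn) => [egt|]; last by lia.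
  by rewrite egt in he.
- have := ev n.-1 1 ltac:(lia) ltac:(lia) ltac:(lia).
  rewrite tail_label_last (tail_label_head Hn) => [egt|]; last by lia.
  by rewrite egt in he.
- have := ev o.-1 n.-1 ltac:(lia) ltac:(lia) ltac:(lia).
  by rewrite tail_label_last (tail_label_head Hn) //; lia.
Qed.

Lemma tail_neq_mirror e p q : tail_of e p != mirror (tail_of Lt q).
Proof.
case: p q => [c [a b]] [c' [a' b']]; rewrite /tail_of /= mirror_from_offsets.
have ho := offset_lt c (cneg c'); rewrite -(shift_offset c (cneg c')).
move: (offset c (cneg c')) ho => o ho; apply/eqP => H.
have ev d d' : d < n -> d' < n -> (o + d' == d) || (o + d' == d + n) ->
    tail_label n a b e d = swap (tail_label n a' b' Lt (n - d'.+1)).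
  by move=> hd hd' hdd'; apply: (from_offsets_eq hd hd' hdd' H).
have [o0|[o1|o2]] : o = 0 \/ 0 < o <= n - 3 \/ n - 3 < o by lia.
- have := ev 3 3 ltac:(lia) ltac:(lia) ltac:(lia).
  by rewrite !(tail_label_head Hn) //; lia.
- have := ev 0 (n - o) ltac:(lia) ltac:(lia) ltac:(lia).
  by rewrite !(tail_label_head Hn) //; lia.
- have := ev 3 (n + 3 - o) ltac:(lia) ltac:(lia) ltac:(lia).
  by rewrite !(tail_label_head Hn) //; lia.
Qed.

End Distinct.

Section ValidCount.
Variable n : nat.

Lemma card_labelings_avoiding (a : label) :
  #|[set v : labeling n | [forall k, v k != a]]| = 2 ^ n.
Proof.
have -> : #|[set v : labeling n | [forall k, v k != a]]| =
          #|@ffun_on_mem ('I_n : finType) label (mem (predC1 a))|.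
  by apply: eq_card => v; rewrite inE; apply/forallP/ffun_onP.
by rewrite card_ffun_on cardC1 card_option card_bool card_ord.
Qed.

Lemma card_valid_labelings : #|valid_labelings n| + 2 ^ n.+1 = 3 ^ n + 2.
Proof.
set A := [set v : labeling n | [forall k, v k != Gt]].
set B := [set v : labeling n | [forall k, v k != Lt]].
have hV : valid_labelings n = ~: (A :|: B) :|: (A :&: B).
  apply/setP => v; rewrite !inE /valid -!negb_exists.
  by case: [exists k, v k == Lt]; case: [exists k, v k == Gt].
have hAB : A :&: B = [set [ffun=> Eq]].
  apply/setP => v; rewrite !inE; apply/andP/eqP => [[/forallP h1 /forallP h2]|->].
    by apply/ffunP => k; rewrite ffunE; move: (h1 k) (h2 k); case: (v k) => [[]|].
  by split; apply/forallP => k; rewrite ffunE.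
have hT : #|~: (A :|: B)| + #|A :|: B| = 3 ^ n.
  by rewrite addnC cardsC card_ffun card_option card_bool card_ord.
have hD : [disjoint ~: (A :|: B) & A :&: B].
  rewrite -setI_eq0; apply/eqP/setP => v.
  by rewrite !(in_set0, in_setI, in_setC, in_setU); case: (v \in A); case: (v \in B).
rewrite hV; have /eqP -> : #|~: (A :|: B) :|: A :&: B| == #|~: (A :|: B)| + #|A :&: B|.
  by rewrite (leq_card_setU _ _).2.
rewrite hAB cards1; have := cardsUI A B.
by rewrite hAB cards1 !card_labelings_avoiding expnS; lia.
Qed.

End ValidCount.

Section RedundantCount.
Variable n : nat.
Hypothesis Hn : 6 < n.

Lemma card_tail_params : #|tail_params n| = 5 * n.
Proof.
pose L := [set q : label * label | (q.1 == Lt) || (q.2 == Lt)].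
have -> : tail_params n = setX [set: 'I_n] L by apply/setP => -[c q]; rewrite !inE.
rewrite cardsX cardsT card_ord mulnC; congr (_ * _).
have -> : #|L| = #|[:: (Lt, Lt); (Lt, Gt); (Lt, Eq); (Gt, Lt); (Eq, Lt)]|.
  by apply: eq_card => -[[[]|] [[]|]]; rewrite inE.
by apply/card_uniqP.
Qed.

Lemma card_redundant : #|redundant n| = 10 * n.
Proof.
have disj : lt_tails n :&: (@mirror n) @: lt_tails n = set0.
  apply/setP => v; rewrite !inE; apply/negbTE/negP.
  case/andP => /imsetP [p _ ->] /imsetP [_ /imsetP [q _ ->]] /eqP.
  by rewrite (negbTE (tail_neq_mirror Hn _ _ _)).
have inj : {in tail_params n &, injective (tail_of Lt)}.
  by move=> p q _ _ /(tail_of_eq Hn (isT : Lt != Gt)) [].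
rewrite cardsU disj cards0 subn0 (card_imset _ (can_inj (@mirrorK n))).
by rewrite card_in_imset // card_tail_params; lia.
Qed.

Lemma valid_tail e p : p \in tail_params n -> valid (tail_of e p).
Proof.
case: p => c [a b]; rewrite inE /= /valid /tail_of /= => hab.
have -> : [exists k, from_offsets c (tail_label n a b e) k == Gt].
  by apply/existsP; exists (shift c 0); rewrite from_offsets_shift ?(tail_label_head Hn) //; lia.
apply/eqP/existsP; case/orP: hab => /eqP <-.
  by exists (shift c (n - 3)); rewrite from_offsets_shift ?(tail_label_ante Hn) //; lia.
by exists (shift c (n - 2)); rewrite from_offsets_shift ?(tail_label_pen Hn) //; lia.
Qed.

Lemma redundant_valid : redundant n \subset valid_labelings n.
Proof.
apply/subsetP => v; rewrite !inE => /orP [/imsetP [p hp ->]|/imsetP [u /imsetP [p hp ->] ->]].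
  exact: valid_tail.
exact/valid_mirror/valid_tail.
Qed.

Lemma twin_exists v : v \in redundant n ->
  exists2 u, u \in valid_labelings n :\: redundant n & window_map u = window_map v.
Proof.
have tail_twin p : p \in tail_params n -> exists2 u,
    u \in valid_labelings n :\: redundant n & window_map u = window_map (tail_of Lt p).
  move=> hp; exists (tail_of Eq p).
    rewrite !inE valid_tail // andbT negb_or; apply/andP; split.
      by apply/imsetP => -[q _] /(tail_of_eq Hn (isT : Eq != Gt)) [].
    by apply/imsetP => -[_ /imsetP [q _ ->]] /eqP; rewrite (negbTE (tail_neq_mirror Hn _ _ _)).
  apply/window_map_eqP/same_windows_sym; case: p {hp} => c [a b].
  exact: same_windows_twin.
rewrite inE => /orP [/imsetP [p hp ->]|/imsetP [_ /imsetP [p hp ->] ->]]; first exact: tail_twin.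
have [u hu /window_map_eqP same] := tail_twin p hp; exists (mirror u).
  by move: hu; rewrite !in_setD redundant_mirror !inE => /andP [-> /valid_mirror].
exact/window_map_eqP/same_windows_mirror.
Qed.

Lemma card_dyn_set : #|dyn_set n| + 10 * n = #|valid_labelings n|.
Proof.
rewrite dyn_setE; last by lia.
have -> : (@window_map n) @: valid_labelings n =
          (@window_map n) @: (valid_labelings n :\: redundant n).
  apply/eqP; rewrite eqEsubset [X in _ && X]imsetS ?subsetDl // andbT.
  apply/subsetP => _ /imsetP [v hv ->]; case hr: (v \in redundant n).
    by have [u hu <-] := twin_exists hr; exact: imset_f.
  by apply: imset_f; rewrite inE hr hv.
rewrite card_in_imset; last first.
  move=> v w /setDP [hv nv] /setDP [hw nw]; rewrite !inE in hv hw.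
  exact: window_map_inj.
rewrite cardsD (setIidPr redundant_valid) card_redundant subnK //.
by rewrite -card_redundant subset_leq_card // redundant_valid.
Qed.

End RedundantCount.

Theorem mainTheorem7 (n : nat) : 6 < n ->
  mu128 n = ((3%:R ^+ n - 2%:R ^+ n.+1 - (10 * n)%:R + 2%:R)
             / (3%:R ^+ n - 2%:R ^+ n.+1 + 2%:R) : rat)%R.
Proof.
move=> Hn; rewrite /mu128; congr (_ / _)%R.
have : (#|dyn_set n| + 10 * n + 2 ^ n.+1 = 3 ^ n + 2)%N.
  by rewrite card_dyn_set // card_valid_labelings.
move/(congr1 (fun m : nat => (m%:R : rat))); rewrite /= !natrD !natrX.
by move=> h; lra.
Qed.
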